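(* Let $X$ be a compactum, let $n\geq2$, and let $f:X\to X$ be a function. Consider the statements: (1) $f$ is Touhey; (2) $F_n(f)$ is Touhey; (3) $SF_n(f)$ is Touhey. Then (2) and (3) are equivalent and (2) implies (1). Moreover, (1) does not imply (2) in general: there exist such $X$, $n$, $f$ with $f$ Touhey but $F_n(f)$ not Touhey.
   Context: A compactum is a nondegenerate compact, perfect, Hausdorff topological space. $F_n(X)$ is the set of nonempty subsets of $X$ with at most $n$ points, with the Vietoris topology; $F_1(X)=\{\{x\}:x\in X\}$; $F_n(f)(A)=f(A)$. $SF_n(X)=F_n(X)/F_1(X)$ is the quotient collapsing $F_1(X)$ to a point, $q$ the quotient map, $F_X=q(F_1(X))$, and $SF_n(f)(\chi)=q(F_n(f)(q^{-1}(\chi)))$ for $\chi\neq F_X$, $SF_n(f)(F_X)=F_X$. A function $g:Z\to Z$ is Touhey if for every pair of nonempty open $U,V\subseteq Z$ there exist a periodic point $z\in U$ (i.e. $g^m(z)=z$ for some $m\in\mathbb{N}$) and $k\in\mathbb{Z}_+$ with $g^k(z)\in V$. *)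

From Stdlib Require List.
From HB Require Import structures.
From mathcomp Require Import all_boot all_order all_algebra.
From mathcomp Require Import all_classical all_reals all_analysis.
Set Implicit Arguments. Unset Strict Implicit. Unset Printing Implicit Defensive.
Import Order.TTheory GRing.Theory Num.Theory.
Local Open Scope classical_set_scope.

Definition compactum (X : topologicalType) : Prop :=
  [/\ compact [set: X], hausdorff_space X, perfect_set [set: X]
    & exists x y : X, x <> y].

Definition Touhey (Z : Type) (opn : set Z -> Prop) (g : Z -> Z) : Prop :=
  forall U V : set Z, opn U -> opn V -> U !=set0 -> V !=set0 ->
    exists z, U z /\ (exists m : nat, (0 < m)%N /\ iter m g z = z)
                  /\ (exists k : nat, V (iter k g z)).

Definition isFn (X : choiceType) (n : nat) (A : set X) : Prop :=
  A !=set0 /\ exists s : seq X, (size s <= n)%N /\ A = [set x | x \in s].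

Definition Fn (X : choiceType) (n : nat) := {A : set X | isFn n A}.

(* Vietoris basic open set <U_1,...,U_k> *)
Definition vbase (X : choiceType) (n : nat) (Us : seq (set X)) (B : Fn X n) : Prop :=
  (forall x, proj1_sig B x -> exists U, List.In U Us /\ U x) /\
  (forall U, List.In U Us -> exists x, proj1_sig B x /\ U x).

Definition VOpen (X : topologicalType) (n : nat) (O : set (Fn X n)) : Prop :=
  forall A, O A -> exists Us : seq (set X),
    (forall U, List.In U Us -> open U) /\ vbase Us A /\ (forall B, vbase Us B -> O B).

Lemma isFn_image (X : choiceType) (n : nat) (f : X -> X) (A : set X) :
  isFn n A -> isFn n (f @` A).
Proof.
move=> [[x Ax] [s [hs eA]]]; split; first by exists (f x), x.
rewrite eA; exists (map f s); rewrite size_map; split => //.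
apply/seteqP; split => y /=.
- by case=> z zs <-; exact: map_f.
- by move=> /mapP[z zs ->]; exists z.
Qed.

Definition Fn_map (X : choiceType) (n : nat) (f : X -> X) (A : Fn X n) : Fn X n :=
  exist _ (f @` proj1_sig A) (isFn_image f (proj2_sig A)).

Definition is_singleton (X : choiceType) (n : nat) (A : Fn X n) : Prop :=
  exists x, proj1_sig A = [set x].

(* SF_n(X) = F_n(X)/F_1(X): the collapsed point F_X is None, every other
   equivalence class is the singleton class of a non-singleton A, Some A. *)
Definition SFn (X : choiceType) (n : nat) :=
  option {A : Fn X n | ~ is_singleton A}.

Definition qmap (X : choiceType) (n : nat) (A : Fn X n) : SFn X n :=
  match pselect (is_singleton A) with
  | left _ => None
  | right h => Some (exist _ A h)
  end.

Definition SOpen (X : topologicalType) (n : nat) (O : set (SFn X n)) : Prop :=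
  @VOpen X n (@qmap X n @^-1` O).

Definition SFn_map (X : choiceType) (n : nat) (f : X -> X) (c : SFn X n) : SFn X n :=
  match c with
  | None => None
  | Some A => qmap (Fn_map f (proj1_sig A))
  end.

From HB Require Import structures.
From mathcomp Require Import all_boot all_order all_algebra.
From mathcomp Require Import all_classical all_reals all_analysis.
From mathcomp Require Import zify.
Set Implicit Arguments. Unset Strict Implicit. Unset Printing Implicit Defensive.
Local Open Scope classical_set_scope.

(* The quotient map q : F_n(X) -> SF_n(X) is continuous and onto and semiconjugates
   F_n(f) to SF_n(f), so the Touhey property passes from F_n(f) to SF_n(f).
   Conversely, q is injective and open on the non-singletons, and when X is
   perfect and Hausdorff and n >= 2 every nonempty Vietoris open set contains a
   nonempty basic open set of non-singletons: add a second point close to a lone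
   one, then separate two points by disjoint open sets.  So the property lifts
   back along q.  If A in <U> is F_n(f)-periodic and f^k(A) lies in <V>, then A is
   a finite f^m-invariant set and so contains an f-periodic point, which lies in
   U and is sent into V by f^k.

   For the counterexample, flip the first coordinate of the Cantor space and
   shift the others.  This map is Touhey, but all points of f^k(A) have the same
   first coordinate, so no iterate of a set in <[x_0 = 0]> meets both
   [x_0 = 0] and [x_0 = 1]. *)

Section semiconjugacy.
Variables (Z W : Type) (openZ : set Z -> Prop) (q : Z -> W).
Variables (g : Z -> Z) (h : W -> W).
Hypothesis q_semiconj : forall z, q (g z) = h (q z).

Lemma iter_semiconj k z : q (iter k g z) = iter k h (q z).
Proof. by elim: k => //= k IH; rewrite q_semiconj IH. Qed.

Lemma Touhey_quotient : (forall w, exists z, q z = w) ->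
  Touhey openZ g -> Touhey (fun O => openZ (q @^-1` O)) h.
Proof.
move=> q_surj gT U V oU oV [w Uw] [w' Vw'].
have [u qu] := q_surj w; have [v qv] := q_surj w'; subst w w'.
have [||z [Uz [[m [m0 gm]] [k Vk]]]] := gT _ _ oU oV.
- by exists u.
- by exists v.
exists (q z); split=> //; split; first by exists m; rewrite -iter_semiconj gm.
by exists k; rewrite -iter_semiconj.
Qed.

Variable S : set Z.
Hypothesis q_inj_S : forall x y, S y -> q x = q y -> x = y.
Hypothesis open_shrink : forall U, openZ U -> U !=set0 ->
  exists U', [/\ openZ U', U' !=set0 & U' `<=` U `&` S].

Lemma preimage_image_S (U : set Z) : U `<=` S -> q @^-1` (q @` U) = U.
Proof.
move=> US; apply/seteqP; split=> [x [y Uy qyx]|x Ux]; last by exists x.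
by rewrite (q_inj_S (US _ Uy) (esym qyx)).
Qed.

Lemma Touhey_from_quotient :
  Touhey (fun O => openZ (q @^-1` O)) h -> Touhey openZ g.
Proof.
move=> hT U V oU oV U0 V0.
have [U' [oU' [u U'u] U'U]] := open_shrink oU U0.
have [V' [oV' [v V'v] V'V]] := open_shrink oV V0.
have [||||w [[z U'z <-] [[m [m0 hm]] [k [y V'y qy]]]]] := hT (q @` U') (q @` V').
- by rewrite preimage_image_S // => x /U'U[].
- by rewrite preimage_image_S // => x /V'V[].
- by exists (q u), u.
- by exists (q v), v.
have [[Uz Sz] [Vy Sy]] := (U'U _ U'z, V'V _ V'y).
exists z; split=> //; split.
  by exists m; split=> //; apply: q_inj_S Sz _; rewrite iter_semiconj.
exists k; suff -> : iter k g z = y by [].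
by apply: q_inj_S Sy _; rewrite iter_semiconj.
Qed.
End semiconjugacy.

Lemma iter_eventually_periodic (T : eqType) (g : T -> T) (s : seq T) (x : T) :
  (forall i, iter i g x \in s) ->
  exists i p, (0 < p)%N /\ iter p g (iter i g x) = iter i g x.
Proof.
move=> orbit_s; pose t := [seq iter i g x | i <- iota 0 (size s).+1].
have /(uniqPn x)[i [j [ij jt]]] : ~~ uniq t.
  apply/negP => /uniq_leq_size t_s.
  have : (size t <= size s)%N by apply: t_s => _ /mapP[i _ ->].
  by rewrite size_map size_iota ltnn.
rewrite size_map size_iota in jt.
rewrite !(nth_map 0) ?size_iota ?(ltn_trans ij) // !nth_iota ?(ltn_trans ij) //.
move=> eij; exists i, (j - i); rewrite subn_gt0 ij -iterD subnK ?(ltnW ij) //.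
Qed.

Section vietoris.
Variables (X : topologicalType) (n : nat).

Lemma Fn_map_iter (f : X -> X) k (A : Fn X n) :
  proj1_sig (iter k (Fn_map f) A) = iter k f @` proj1_sig A.
Proof.
elim: k => [|k IH]; first by rewrite image_id.
by rewrite iterS /= IH image_comp.
Qed.

Definition Fn_of_seq (s : seq X) (hs : (size s <= n)%N) (x : X) (hx : x \in s) :
  Fn X n :=
  exist _ [set y | y \in s] (conj (ex_intro _ x hx) (ex_intro _ s (conj hs erefl))).

Lemma vbase_open (Us : seq (set X)) :
  (forall U, List.In U Us -> open U) -> VOpen (@vbase X n Us).
Proof. by move=> oUs A UsA; exists Us. Qed.

Lemma vbase1E (U : set X) (A : Fn X n) : vbase [:: U] A <-> proj1_sig A `<=` U.
Proof.
split=> [[AU _] x /AU[_ [[<-|[]] //]]|AU].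
have [x Ax] := (proj2_sig A).1.
split=> [y Ay|_ [<-|[]]]; first by exists U; split; [left|exact: AU].
by exists x; split; [|exact: AU].
Qed.

Lemma qmap_Fn_map (f : X -> X) (A : Fn X n) : qmap (Fn_map f A) = SFn_map f (qmap A).
Proof.
rewrite {2}/qmap; case: pselect => [[x Ax]|//]; rewrite /qmap.
by case: pselect => // -[]; exists (f x); rewrite /= Ax image_set1.
Qed.

Lemma qmap_inj (A B : Fn X n) : ~ is_singleton B -> qmap A = qmap B -> A = B.
Proof.
rewrite /qmap => B1; case: (pselect (is_singleton B)) => [//|B1'].
by case: (pselect (is_singleton A)) => [//|A1] [].
Qed.

Lemma qmap_surj (x : X) : (0 < n)%N -> forall c : SFn X n, exists A, qmap A = c.
Proof.
move=> n0 [[A A1]|].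
  by exists A; rewrite /qmap; case: pselect => // A1'; rewrite (Prop_irrelevance A1 A1').
exists (Fn_of_seq (s := [:: x]) n0 (mem_head x [::])).
rewrite /qmap; case: pselect => // -[]; exists x.
by apply/seteqP; split=> y; rewrite /= inE => /eqP.
Qed.

Lemma nbhs_meet_opens (x : X) (Us : seq (set X)) :
  (forall U, List.In U Us -> open U) ->
  nbhs x [set y | forall U, List.In U Us -> U x -> U y].
Proof.
elim: Us => [|U Us IH] oUs; first by apply: nearW => y U [].
have U_x : nbhs x [set y | U x -> U y].
  have [Ux|nUx] := pselect (U x); last by apply: nearW => y /nUx.
  by apply: filterS (open_nbhs_nbhs (conj (oUs U (or_introl erefl)) Ux)) => y Uy _.
apply: filterS (filterI U_x (IH (fun V UsV => oUs V (or_intror UsV)))).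
by move=> y [Uy Usy] V [<-|/Usy].
Qed.

Lemma vbase_two_points (Us : seq (set X)) (A : Fn X n) :
  (2 <= n)%N -> perfect_set [set: X] -> (forall U, List.In U Us -> open U) ->
  vbase Us A -> exists B : Fn X n, vbase Us B /\
    exists a b, [/\ a <> b, proj1_sig B a & proj1_sig B b].
Proof.
move=> n2 Xperfect oUs [AUs UsA]; have [x Ax] := (proj2_sig A).1.
have [[y [Ay yx]]|A1] := pselect (exists y, proj1_sig A y /\ y <> x).
  by exists A; split; [|exists y, x].
have Ax_eq y : proj1_sig A y -> y = x.
  by move=> Ay; apply: contrapT => yx; apply: A1; exists y.
have : limit_point [set: X] x by rewrite Xperfect.2.
move=> /(_ _ (nbhs_meet_opens x oUs))[y [/eqP yx _ Usy]].
exists (Fn_of_seq (s := [:: x; y]) n2 (mem_head x [:: y])); split; last first.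
  by exists x, y; split=> //=; [exact: nesym | exact: mem_head | rewrite !inE eqxx orbT].
have [Ux [UsUx Ux_x]] := AUs x Ax.
split=> [z|U /UsA[z [Az Uz]]] /=.
  by rewrite !inE => /orP[]/eqP->; exists Ux; split=> //; exact: Usy.
by exists x; rewrite inE eqxx -(Ax_eq z Az).
Qed.

Lemma vbase_nonsingleton (Us : seq (set X)) (B : Fn X n) (a b : X) :
  hausdorff_space X -> (forall U, List.In U Us -> open U) -> vbase Us B ->
  a <> b -> proj1_sig B a -> proj1_sig B b ->
  exists Us' : seq (set X), [/\ forall U, List.In U Us' -> open U, vbase Us' B &
    forall C : Fn X n, vbase Us' C -> vbase Us C /\ ~ is_singleton C].
Proof.
move=> Xhaus oUs [BUs UsB] /eqP ab Ba Bb.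
move: Xhaus; rewrite open_hausdorff => /(_ a b ab).
move=> [[Wa Wb] /= [/[!inE] Wa_a Wb_b] [oWa oWb WaWb]].
have [Ua [UsUa Ua_a]] := BUs a Ba; have [Ub [UsUb Ub_b]] := BUs b Bb.
exists [:: Wa `&` Ua, Wb `&` Ub & Us]; split.
- by move=> U [<-|[<-|/oUs//]]; apply: openI => //; exact: oUs.
- split=> [x /BUs[U [UsU Ux]]|U [<-|[<-|/UsB//]]].
  + by exists U; split=> //; right; right.
  + by exists a.
  + by exists b.
move=> C [CUs' Us'C]; split.
  split=> [x /CUs'[U [[<-|[<-|UsU]] Ux]]|U UsU].
  - by exists Ua; case: Ux.
  - by exists Ub; case: Ux.
  - by exists U.
  - exact: Us'C _ (or_intror (or_intror UsU)).
move=> [c Cc].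
have [x [Cx [Wa_x _]]] := Us'C _ (or_introl erefl).
have [y [Cy [Wb_y _]]] := Us'C _ (or_intror (or_introl erefl)).
rewrite Cc in Cx Cy; rewrite Cx in Wa_x; rewrite Cy in Wb_y.
by have : (Wa `&` Wb) c by []; rewrite WaWb.
Qed.

Lemma VOpen_nonsingleton (O : set (Fn X n)) :
  (2 <= n)%N -> hausdorff_space X -> perfect_set [set: X] -> VOpen O -> O !=set0 ->
  exists O', [/\ VOpen O', O' !=set0 & O' `<=` O `&` (fun A => ~ is_singleton A)].
Proof.
move=> n2 Xhaus Xperfect oO [A OA].
have [Us [oUs [UsA UsO]]] := oO A OA.
have [B [UsB [a [b [ab Ba Bb]]]]] := vbase_two_points n2 Xperfect oUs UsA.
have [Us' [oUs' Us'B Us'Us]] := vbase_nonsingleton Xhaus oUs UsB ab Ba Bb.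
exists (vbase Us'); split; [exact: vbase_open | by exists B |].
by move=> C /Us'Us[/UsO].
Qed.
End vietoris.

Section hyperspace_Touhey.
Variables (X : topologicalType) (n : nat) (f : X -> X).

Lemma Touhey_SFn_of_Fn (x : X) : (0 < n)%N ->
  Touhey (@VOpen X n) (Fn_map f) -> Touhey (@SOpen X n) (SFn_map f).
Proof. by move=> n0; apply: Touhey_quotient; [exact: qmap_Fn_map | exact: qmap_surj]. Qed.

Lemma Touhey_Fn_of_SFn : (2 <= n)%N -> hausdorff_space X -> perfect_set [set: X] ->
  Touhey (@SOpen X n) (SFn_map f) -> Touhey (@VOpen X n) (Fn_map f).
Proof.
move=> n2 Xhaus Xperfect; apply: Touhey_from_quotient (qmap_Fn_map f) _ _ _.
- exact: qmap_inj.
- by move=> O oO O0; exact: VOpen_nonsingleton.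
Qed.

Lemma Touhey_of_Touhey_Fn : (0 < n)%N ->
  Touhey (@VOpen X n) (Fn_map f) -> Touhey (@open X) f.
Proof.
move=> n0 FnT U V oU oV [x Ux] [y Vy].
have vbase1_open (W : set X) : open W -> VOpen (@vbase X n [:: W]).
  by move=> oW; apply: vbase_open => _ [<-|[]].
have vbase1_n0 (W : set X) z : W z -> @vbase X n [:: W] !=set0.
  move=> Wz; exists (Fn_of_seq (s := [:: z]) n0 (mem_head z [::])).
  by apply/vbase1E => w /=; rewrite inE => /eqP->.
have [A [AU [[m [m0 Am]] [k AkV]]]] :=
  FnT _ _ (vbase1_open U oU) (vbase1_open V oV) (vbase1_n0 U x Ux) (vbase1_n0 V y Vy).
move/vbase1E in AU; move/vbase1E in AkV.
have [[t At] [s [_ As]]] := proj2_sig A.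
have A_inv u : proj1_sig A u -> proj1_sig A (iter m f u).
  by rewrite -{2}Am Fn_map_iter; exists u.
have A_orbit i : proj1_sig A (iter i (iter m f) t) by elim: i => //= i; exact: A_inv.
have orbit_s i : iter i (iter m f) t \in s by have := A_orbit i; rewrite As.
have [i [p [p0 periodic]]] := iter_eventually_periodic orbit_s.
exists (iter i (iter m f) t); split; first exact: AU.
split; first by exists (p * m)%N; rewrite muln_gt0 p0 m0 iterM.
by exists k; apply: AkV; rewrite Fn_map_iter; exists (iter i (iter m f) t).
Qed.
End hyperspace_Touhey.

Lemma cvg_cantor_prefix (x : cantor_space) (y : nat -> cantor_space) :
  (forall N i, (i < N)%N -> y N i = x i) -> y @ \oo --> x.
Proof.
move=> yx; apply/cvg_sup => i W [V] [[Wo] oW <-] WfN WU.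
by apply: (filterS WU); rewrite nbhs_simpl; exists i.+1 => // j /= ij; rewrite yx.
Qed.

Lemma cantor_open_cylinder (U : set cantor_space) (x : cantor_space) :
  open U -> U x ->
  exists N, forall y : cantor_space, (forall i, (i < N)%N -> y i = x i) -> U y.
Proof.
move=> oU Ux; apply: contrapT => noN.
have /choice[y yN] : forall N, exists y : cantor_space,
    (forall i, (i < N)%N -> y i = x i) /\ ~ U y.
  move=> N; apply: contrapT => UN; apply: noN; exists N => y yx.
  by apply: contrapT => nUy; apply: UN; exists y.
have := cvg_cantor_prefix (fun N => (yN N).1) (open_nbhs_nbhs (conj oU Ux)).
by rewrite nbhs_simpl => -[N _ /(_ N (leqnn N))]; exact: (yN N).2.
Qed.

Lemma open_cantor_head (b : bool) : open [set x : cantor_space | x 0%N = b].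
Proof.
apply: (@open_comp cantor_space bool (fun x => x 0%N) [set b]) => [x _|].
  exact: (@proj_continuous nat (fun _ => bool) 0%N x).
exact: discrete_open.
Qed.

Definition flip_shift (x : cantor_space) : cantor_space :=
  fun i => if i is j.+1 then x j.+2 else ~~ x 0%N.

Lemma iter_flip_shift k x i : iter k flip_shift x i =
  if i is j.+1 then x (j.+1 + k)%N else x 0%N (+) odd k.
Proof.
elim: k i => [|k IH] [|i] /=; rewrite ?addn0 ?addbF //.
- by rewrite IH addbN.
- by rewrite IH addSnnS.
Qed.

Definition cantor_loop (b : bool) (w : nat -> bool) (p : nat) : cantor_space :=
  fun i => if i is j.+1 then w (j %% p) else b.

Lemma cantor_loop_periodic b w p :
  iter p.*2 flip_shift (cantor_loop b w p) = cantor_loop b w p.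
Proof.
apply: functional_extensionality_dep => -[|i]; rewrite iter_flip_shift /=.
  by rewrite odd_double addbF.
by rewrite -addnn addnA !modnDr.
Qed.

Lemma flip_shift_Touhey : Touhey (@open cantor_space) flip_shift.
Proof.
move=> U V oU oV [x Ux] [y Vy].
have [N1 UN1] := cantor_open_cylinder oU Ux.
have [N2 VN2] := cantor_open_cylinder oV Vy.
pose N := (maxn N1 N2).+1.
have [N1N N2N] : (N1 < N /\ N2 < N)%N by rewrite !ltnS leq_maxl leq_maxr.
(* The [d] zeros make the head coordinate after [N + d] steps equal to [y 0]. *)
pose d : nat := x 0%N (+) y 0%N (+) odd N.
pose p := (N + d + N)%N.
pose w j := if (j < N)%N then x j.+1
            else if (j < N + d)%N then false else y (j - (N + d)).+1.
exists (cantor_loop (x 0%N) w p); split.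
  apply: UN1 => -[|i] // iN1 /=.
  by rewrite modn_small /w ?ifT //; lia.
split; first by exists p.*2; rewrite cantor_loop_periodic double_gt0 /p; split=> //; lia.
exists (N + d)%N; apply: VN2 => -[|i] iN2; rewrite iter_flip_shift /=.
  rewrite oddD oddb /N /=.
  by case: (x 0%N); case: (y 0%N); case: (odd (maxn N1 N2)).
rewrite addSn /= modn_small /w; last lia.
rewrite ifF; last by apply/negbTE; rewrite -leqNgt; lia.
rewrite ifF; last by apply/negbTE; rewrite -leqNgt; lia.
by congr (y _.+1); lia.
Qed.

Lemma flip_shift_F2_not_Touhey : ~ Touhey (@VOpen cantor_space 2) (Fn_map flip_shift).
Proof.
pose X0 := [set x : cantor_space | x 0%N = false].
pose X1 := [set x : cantor_space | x 0%N = true].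
pose c0 : cantor_space := fun=> false; pose c1 : cantor_space := fun=> true.
move=> FnT; have [||||A [/vbase1E AX0 [_ [k [_ AkX01]]]]] :=
  FnT (vbase [:: X0]) (vbase [:: X0; X1]).
- by apply: vbase_open => _ [<-|[]]; exact: open_cantor_head.
- by apply: vbase_open => _ [<-|[<-|[]]]; exact: open_cantor_head.
- exists (Fn_of_seq (n := 2) (s := [:: c0]) isT (mem_head c0 [::])).
  by apply/vbase1E => z /=; rewrite inE => /eqP->.
- exists (Fn_of_seq (n := 2) (s := [:: c0; c1]) isT (mem_head c0 [:: c1])).
  split=> [z|U [<-|[<-|[]]]] /=.
  + rewrite !inE => /orP[]/eqP->; first by exists X0; split; [left|].
    by exists X1; split; [right; left|].
  + by exists c0; rewrite inE eqxx.
  + by exists c1; rewrite !inE eqxx orbT.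
have head_k z : proj1_sig (iter k (Fn_map flip_shift) A) z -> z 0%N = odd k.
  by rewrite Fn_map_iter => -[a /AX0 a0 <-]; rewrite iter_flip_shift a0.
have [a [/head_k ak X0a]] := AkX01 X0 (or_introl erefl).
have [b [/head_k bk X1b]] := AkX01 X1 (or_intror (or_introl erefl)).
by move: X0a X1b; rewrite /X0 /X1 /= ak bk => ->.
Qed.

Lemma cantor_compactum : compactum cantor_space.
Proof.
split; [exact: cantor_space_compact | exact: cantor_space_hausdorff
       | exact: cantor_perfect |].
by exists (fun=> false), (fun=> true) => /(congr1 (fun x => x 0%N)).
Qed.

Theorem theorem21 :
  (forall (X : topologicalType) (n : nat) (f : X -> X),
      compactum X -> (2 <= n)%N ->
      (Touhey (@VOpen X n) (Fn_map f) <-> Touhey (@SOpen X n) (SFn_map f)) /\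
      (Touhey (@VOpen X n) (Fn_map f) -> Touhey (@open X) f)) /\
  (exists (X : topologicalType) (n : nat) (f : X -> X),
      [/\ compactum X, (2 <= n)%N, Touhey (@open X) f
        & ~ Touhey (@VOpen X n) (Fn_map f)]).
Proof.
split=> [X n f [_ Xhaus Xperfect [x _]] n2|].
  have n0 : (0 < n)%N := ltnW n2.
  split; last exact: Touhey_of_Touhey_Fn.
  by split; [exact: Touhey_SFn_of_Fn | exact: Touhey_Fn_of_SFn].
exists cantor_space, 2%N, flip_shift; split=> //.
- exact: cantor_compactum.
- exact: flip_shift_Touhey.
- exact: flip_shift_F2_not_Touhey.
Qed.
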